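(* Let $\mathcal{X}$ be a right coideal of $\mathcal{U}$, $\mu\in\mathbb{C}^\times$, and let $0\ne X\in\mathcal{X}\cap[\mathcal{U}]_\mu$. Write uniquely $X=\sum_{t=0}^{N}X_tG^{(t)}$ with $N=\partial_4(X)$, each $X_t\in\mathrm{Lin}\{F^{(i)}f_\mu E^{(j)}:i,j\in\mathbb{N}_0\}$ and $X_N\ne0$. For $0\le t\le N$ let $s_{13}(t)=\max\{\partial_{13}(X_m): m\ge t,\ X_m\ne0\}$. Then $$\dim\mathcal{X}\ \ge\ \sum_{t=0}^{N}\big(s_{13}(t)+1\big).$$
   Context: Let $q\in\mathbb{C}$ be transcendental. $\mathcal{U}$ is the unital algebra generated by $E,F,G,f_\mu$ ($\mu\in\mathbb{C}^\times$) with relations $f_\mu f_\nu=f_{\mu\nu}$, $f_\mu E=\mu^2Ef_\mu$, $f_\mu F=\mu^{-2}Ff_\mu$, $f_\mu G=Gf_\mu$, $GE=E(G+2)$, $GF=F(G-2)$, $EF-FE=(f_q-f_{q^{-1}})/(q-q^{-1})$, $f_1=1$; $K=f_{q^{1/2}}$ for a fixed square root; Hopf structure $\Delta E=E\otimes K+K^{-1}\otimes E$, $\Delta F=F\otimes K+K^{-1}\otimes F$, $\Delta G=1\otimes G+G\otimes1$, $\Delta f_\mu=f_\mu\otimes f_\mu$. With $[k]=(q^k-q^{-k})/(q-q^{-1})$, $F^{(k)}=F^kK^{-k}/[k]!$, $E^{(k)}=K^{-k}E^k/[k]!$, $G^{(k)}=G^k/k!$, the elements $F^{(i)}f_\mu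 E^{(j)}G^{(k)}$ form a basis of $\mathcal{U}$; $[\mathcal{U}]_\mu=\mathrm{Lin}\{F^{(i)}f_\mu E^{(j)}G^{(k)}:i,j,k\in\mathbb{N}_0\}$. For a basis element $Y=F^{(i)}f_\mu E^{(j)}G^{(k)}$ put $\partial_{13}(Y)=i+j$, $\partial_4(Y)=k$, and for a finite linear combination of basis elements with nonzero coefficients take the maximum over the occurring basis elements. A right coideal is a subspace $\mathcal{X}$ with $\Delta(\mathcal{X})\subset\mathcal{X}\otimes\mathcal{U}$. *)

From HB Require Import structures.
From mathcomp Require Import all_boot all_order all_algebra.
From mathcomp Require Import reals complex.
Set Implicit Arguments. Unset Strict Implicit. Unset Printing Implicit Defensive.
Import Order.TTheory GRing.Theory Num.Theory.
Local Open Scope ring_scope.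

(* The complex field: C := R[i] for an arbitrary (hence isomorphic to the
   usual) real number field R : realType. *)

Definition transcendental (C : fieldType) (q : C) : Prop :=
  forall p : {poly rat}, p != 0 -> (map_poly (fun r : rat => ratr r) p).[q] != 0.

Definition qnum (C : fieldType) (q : C) (k : nat) : C :=
  (q ^+ k - q ^- k) / (q - q^-1).
Definition qfact (C : fieldType) (q : C) (k : nat) : C :=
  \prod_(1 <= i < k.+1) qnum q i.

Definition indep_family (C : fieldType) (V : lmodType C) (I : eqType)
    (D : I -> Prop) (b : I -> V) : Prop :=
  forall (s : seq I) (c : I -> C), uniq s -> (forall i, i \in s -> D i) ->
    \sum_(i <- s) c i *: b i = 0 -> forall i, i \in s -> c i = 0.

Definition spans_family (C : fieldType) (V : lmodType C) (I : eqType)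
    (D : I -> Prop) (b : I -> V) : Prop :=
  forall v : V, exists (s : seq I) (c : I -> C),
    (forall i, i \in s -> D i) /\ v = \sum_(i <- s) c i *: b i.

Definition basis_family (C : fieldType) (V : lmodType C) (I : eqType)
    (D : I -> Prop) (b : I -> V) : Prop :=
  indep_family D b /\ spans_family D b.

Definition lin_indep (C : fieldType) (V : lmodType C) (n : nat) (v : 'I_n -> V) : Prop :=
  forall c : 'I_n -> C, \sum_(i < n) c i *: v i = 0 -> forall i, c i = 0.

Definition subspace (C : fieldType) (V : lmodType C) (P : V -> Prop) : Prop :=
  P 0 /\ forall (a : C) (x y : V), P x -> P y -> P (a *: x + y).

Definition dim_ge (C : fieldType) (V : lmodType C) (P : V -> Prop) (n : nat) : Prop :=
  exists v : 'I_n -> V, (forall i, P (v i)) /\ lin_indep v.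

(* Divided powers and PBW basis elements
   F^(i) f_mu E^(j) G^(k) with F^(i) = F^i K^-i/[i]!, E^(j) = K^-j E^j/[j]!,
   G^(k) = G^k/k!, where K = f_{qh}, K^-1 = f_{qh^-1}, qh^2 = q. *)
Section PBW.
Variables (C : fieldType) (U : algType C) (q qh : C) (E F G : U) (f : C -> U).
Definition Fdiv (i : nat) : U := (qfact q i)^-1 *: (F ^+ i * f (qh ^- i)).
Definition Ediv (j : nat) : U := (qfact q j)^-1 *: (f (qh ^- j) * E ^+ j).
Definition Gdiv (k : nat) : U := (k`!%:R : C)^-1 *: G ^+ k.
Definition pbw (x : nat * C * nat * nat) : U :=
  Fdiv x.1.1.1 * f x.1.1.2 * Ediv x.1.2 * Gdiv x.2.
End PBW.

Definition U_relations (C : fieldType) (U : algType C) (q : C)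
    (E F G : U) (f : C -> U) : Prop :=
  (forall mu nu, mu != 0 -> nu != 0 -> f mu * f nu = f (mu * nu)) /\
  (forall mu, mu != 0 -> f mu * E = (mu ^+ 2) *: (E * f mu)) /\
  (forall mu, mu != 0 -> f mu * F = (mu ^- 2) *: (F * f mu)) /\
  (forall mu, mu != 0 -> f mu * G = G * f mu) /\
  G * E = E * (G + 2%:R) /\
  G * F = F * (G - 2%:R) /\
  E * F - F * E = (q - q^-1)^-1 *: (f q - f q^-1) /\
  f 1 = 1.

(* T together with tens : U -> U -> T is the algebra tensor product U (x) U:
   tens is bilinear and multiplicative, and the products of PBW basis
   elements form a basis of T. *)
Definition is_tensor_square (C : fieldType) (U T : algType C)
    (tens : U -> U -> T) (D : nat * C * nat * nat -> Prop)
    (b : nat * C * nat * nat -> U) : Prop :=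
  [/\ forall a x y z, tens (a *: x + y) z = a *: tens x z + tens y z,
      forall a x y z, tens z (a *: x + y) = a *: tens z x + tens z y,
      forall x y x' y', tens x y * tens x' y' = tens (x * x') (y * y'),
      tens 1 1 = 1
    & basis_family (fun p : (nat * C * nat * nat) * (nat * C * nat * nat) => D p.1 /\ D p.2)
                   (fun p => tens (b p.1) (b p.2))].

Definition is_coproduct (C : fieldType) (U T : algType C) (tens : U -> U -> T)
    (qh : C) (E F G : U) (f : C -> U) (Delta : U -> T) : Prop :=
  (forall a x y, Delta (a *: x + y) = a *: Delta x + Delta y) /\
  (forall x y, Delta (x * y) = Delta x * Delta y) /\
  Delta 1 = 1 /\
  Delta E = tens E (f qh) + tens (f qh^-1) E /\
  Delta F = tens F (f qh) + tens (f qh^-1) F /\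
  Delta G = tens 1 G + tens G 1 /\
  (forall mu, mu != 0 -> Delta (f mu) = tens (f mu) (f mu)).

Definition right_coideal (C : fieldType) (U T : algType C) (tens : U -> U -> T)
    (Delta : U -> T) (P : U -> Prop) : Prop :=
  subspace P /\
  forall x, P x -> exists s : seq (U * U),
      (forall p, p \in s -> P p.1) /\ Delta x = \sum_(p <- s) tens p.1 p.2.

(* s_13(t) for X = sum_{(i,j,m) in s} c_{ijm} F^(i) f_mu E^(j) G^(m) with all
   c_{ijm} <> 0: the max of i+j over terms with m >= t; N = partial_4(X). *)
Definition part4 (s : seq (nat * nat * nat)) : nat := \max_(p <- s) p.2.
Definition s13 (s : seq (nat * nat * nat)) (t : nat) : nat :=
  \max_(p <- s | (t <= p.2)%N) (p.1.1 + p.1.2).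

From HB Require Import structures.
From mathcomp Require Import all_boot all_order all_algebra.
From mathcomp Require Import reals complex.
From mathcomp Require Import ring zify.
From Stdlib Require Import ClassicalEpsilon.
Import Order.TTheory GRing.Theory Num.Theory.
Local Open Scope ring_scope.
Set Implicit Arguments. Unset Strict Implicit. Unset Printing Implicit Defensive.

(** Contract the coproduct of [X] in its right tensor factor.  As [X] lies in a right coideal, so
    does every slice [(id (x) y^* ) (Delta X)] with [y] a PBW basis vector.  The coproducts of the
    divided powers are q-binomial, hence the slice of [Delta X] at [F^(l) f_mu E^(r) G^(t)] is
    the sum of [c_ijk F^(i-l) f_(q^-(l+r) mu) E^(j-r) G^(k-t)] over the terms
    [c_ijk F^(i) f_mu E^(j) G^(k)] of [X] with [l <= i], [r <= j] and [t <= k].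
    For every pair [(n, t)] with [t <= N] and [n <= s13 t], take the term [(i, j, k)] of [X] with
    [n <= i + j] and [k] maximal, split [n = l + r] with [l <= i] and [r <= j], and slice at
    [(l, mu, r, t)].  In this slice the coefficient of [F^(i-l) f_(q^-n mu) E^(j-r) G^(k-t)] is
    [c_ijk <> 0], whereas it vanishes in the slice of any other pair [(n', t')] with [t <= t']:
    for [n' <> n] the weight [q^-n' mu] differs since [q] is not a root of unity, and for [n' = n],
    [t < t'] it could only come from a term of [X] whose degree in [G] exceeds [k].  The slices are
    thus triangular, hence linearly independent, and there are [\sum_t (s13 t + 1)] of them. *)

Lemma big_pred1_uniq (I : eqType) (V : nmodType) (r : seq I) x (F : I -> V) :
  uniq r -> \sum_(y <- r | y == x) F y = if x \in r then F x else 0.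
Proof.
elim: r => [|a r IH] /=; first by rewrite big_nil.
move=> /andP[ar ur]; rewrite big_cons inE IH //.
by case: (eqVneq a x) => [<-|] //=; rewrite (negbTE ar) addr0.
Qed.

Lemma sum_nat_delta (K : nzRingType) (V : lmodType K) n r0 (W : nat -> V) :
  \sum_(0 <= r < n) (r == r0)%:R *: W r = (r0 < n)%:R *: W r0.
Proof.
rewrite (eq_bigr (fun r => if r == r0 then W r else 0)) => [|r _]; last first.
  by case: eqP; rewrite ?scale1r ?scale0r.
rewrite -big_mkcond big_pred1_uniq ?iota_uniq // mem_index_iota /=.
by case: (r0 < n)%N; rewrite ?scale1r ?scale0r.
Qed.

Lemma sum_scale_regroup (K : nzRingType) (V : lmodType K) (I : eqType)
    (b : I -> V) (s u : seq I) (c : I -> K) : uniq u -> {subset s <= u} ->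
  \sum_(i <- s) c i *: b i = \sum_(x <- u) (\sum_(i <- s | i == x) c i) *: b x.
Proof.
move=> uu su; under [RHS]eq_bigr do rewrite scaler_suml.
rewrite (exchange_big_dep predT) //=; apply: eq_big_seq => i si.
by rewrite (eq_bigl (pred1 i)) => [|x]; rewrite ?big_pred1_uniq ?su // eq_sym.
Qed.

Lemma bigmax_seq_attained (I : eqType) (r : seq I) (P : pred I) (F : I -> nat) :
  has P r -> exists2 i, (i \in r) && P i & F i = \max_(j <- r | P j) F j.
Proof.
move=> /hasP[i0 ri0 Pi0].
pose attained m := m = 0%N \/ exists2 i, (i \in r) && P i & F i = m.
have : attained (\max_(j <- r | P j) F j).
  rewrite big_seq_cond; elim/big_ind: _ => [|m1 m2|i ?]; [by left| |by right; exists i].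
  by case: leqP.
case=> [max0|//]; exists i0; first by rewrite ri0.
by rewrite max0; apply/eqP; rewrite -leqn0 -max0; exact: leq_bigmax_seq.
Qed.

Lemma subspace_comb (K : fieldType) (V : lmodType K) (P : V -> Prop) (J : eqType)
    (r : seq J) (a : J -> K) (v : J -> V) :
  subspace P -> (forall j, j \in r -> P (v j)) -> P (\sum_(j <- r) a j *: v j).
Proof.
move=> [P0 Pcomb]; elim: r => [|j r IH] Pr; first by rewrite big_nil.
rewrite big_cons; apply: Pcomb; first by apply: Pr; rewrite inE eqxx.
by apply: IH => j' rj'; apply: Pr; rewrite inE rj' orbT.
Qed.

Lemma lin_indep_triangular (K : fieldType) (V : lmodType K) n (v : 'I_n -> V)
    (phi : 'I_n -> V -> K) (h : 'I_n -> nat) :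
  (forall i (a : 'I_n -> K),
     phi i (\sum_(j < n) a j *: v j) = \sum_(j < n) a j * phi i (v j)) ->
  (forall i, phi i (v i) != 0) ->
  (forall i j, j != i -> (h i <= h j)%N -> phi i (v j) = 0) ->
  lin_indep v.
Proof.
move=> phi_lin phi_diag phi_upper a sum_av0.
have phi0 i : phi i 0 = 0.
  have := phi_lin i (fun _ => 0); rewrite big1 => [->|j _]; last by rewrite scale0r.
  by rewrite big1 // => j _; rewrite mul0r.
suff a0 m i : (h i < m)%N -> a i = 0 by move=> i; apply: (a0 (h i).+1).
elim: m i => [//|m IH] i hi.
have := phi_lin i a; rewrite sum_av0 phi0 (bigD1 i) //= big1 ?addr0 => [|j ji].
  by move/esym/eqP; rewrite mulf_eq0 (negbTE (phi_diag i)) orbF => /eqP.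
case: (ltnP (h j) (h i)) => hji; last by rewrite phi_upper ?mulr0.
by rewrite IH ?mul0r // (leq_trans hji).
Qed.

(** * Coordinates with respect to a basis family *)

Section BasisCoordinates.
Variables (K : fieldType) (V : lmodType K) (I : eqType) (D : I -> Prop) (b : I -> V).
Hypothesis basis_b : basis_family D b.

Lemma basis_coef_unique (s s' : seq I) (c c' : I -> K) :
  (forall i, i \in s -> D i) -> (forall i, i \in s' -> D i) ->
  \sum_(i <- s) c i *: b i = \sum_(i <- s') c' i *: b i ->
  forall x, \sum_(i <- s | i == x) c i = \sum_(i <- s' | i == x) c' i.
Proof.
move=> Ds Ds' e x; set u := undup (s ++ s').
have uu : uniq u by apply: undup_uniq.
have su : {subset s <= u} by move=> i si; rewrite mem_undup mem_cat si.
have su' : {subset s' <= u} by move=> i si; rewrite mem_undup mem_cat si orbT.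
have Du i : i \in u -> D i by rewrite mem_undup mem_cat => /orP[/Ds|/Ds'].
pose d y := \sum_(i <- s | i == y) c i - \sum_(i <- s' | i == y) c' i.
have d0 : \sum_(y <- u) d y *: b y = 0.
  rewrite (eq_bigr _ (fun y _ => scalerBl _ _ (b y))) sumrB.
  by rewrite -sum_scale_regroup // -sum_scale_regroup // e subrr.
case xu: (x \in u).
  by apply/eqP; rewrite -subr_eq0; apply/eqP; exact: (proj1 basis_b u d uu Du d0).
have xss' : x \notin s ++ s' by rewrite -mem_undup xu.
by rewrite !big1_seq // => i /andP[/eqP -> xs]; move: xss'; rewrite mem_cat xs ?orbT.
Qed.

Definition basis_rep (v : V) : {p : seq I * (I -> K) |
    (forall i, i \in p.1 -> D i) /\ v = \sum_(i <- p.1) p.2 i *: b i}.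
Proof.
apply: constructive_indefinite_description.
by have [s [c [Ds ->]]] := proj2 basis_b v; exists (s, c).
Defined.

Definition bsupp (v : V) : seq I := undup (sval (basis_rep v)).1.

(* A spanning sequence may repeat indices, so the coordinate at [x] adds up all of them. *)
Definition bcoord (x : I) (v : V) : K :=
  \sum_(i <- (sval (basis_rep v)).1 | i == x) (sval (basis_rep v)).2 i.

Lemma bcoord_comb (s : seq I) (c : I -> K) x : (forall i, i \in s -> D i) ->
  bcoord x (\sum_(i <- s) c i *: b i) = \sum_(i <- s | i == x) c i.
Proof.
rewrite /bcoord; case: basis_rep => [[s' c'] [/= Ds' e]] Ds.
by apply: basis_coef_unique.
Qed.

Lemma bcoord_basis x y : D y -> bcoord x (b y) = (y == x)%:R.
Proof.
move=> Dy; rewrite -[b y]scale1r -(big_seq1 +%R y (fun i => 1 *: b i)).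
rewrite bcoord_comb => [|i]; last by rewrite inE => /eqP ->.
by rewrite big_mkcond big_seq1; case: (y == x).
Qed.

Lemma bsupp_basis v i : i \in bsupp v -> D i.
Proof. by rewrite mem_undup; case: basis_rep => [[s c] [/= Ds _]]; apply: Ds. Qed.

Lemma bcoord_out v x : x \notin bsupp v -> bcoord x v = 0.
Proof.
by move=> xv; rewrite /bcoord big1_seq // => i /andP[/eqP -> xs]; rewrite mem_undup xs in xv.
Qed.

Lemma bcoord_expand v (u : seq I) : uniq u -> {subset bsupp v <= u} ->
  v = \sum_(x <- u) bcoord x v *: b x.
Proof.
rewrite /bcoord /bsupp => uu; case: (basis_rep v) => [[s c] [/= _ ev]] vu.
by rewrite {1}ev (sum_scale_regroup _ _ uu) // => i si; rewrite vu ?mem_undup.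
Qed.

Lemma bcoord_expand_supp v : v = \sum_(x <- bsupp v) bcoord x v *: b x.
Proof. exact: bcoord_expand (undup_uniq _) _. Qed.

Lemma bcoord_linear x a u v : bcoord x (a *: u + v) = a * bcoord x u + bcoord x v.
Proof.
set w := undup (bsupp u ++ bsupp v).
have uw : uniq w by apply: undup_uniq.
have Dw i : i \in w -> D i by rewrite mem_undup mem_cat => /orP[/bsupp_basis|/bsupp_basis].
rewrite {1}(@bcoord_expand u w) // => [|i ui]; last by rewrite mem_undup mem_cat ui.
rewrite {1}(@bcoord_expand v w) // => [|i vi]; last by rewrite mem_undup mem_cat vi orbT.
rewrite scaler_sumr -big_split /=.
under eq_bigr do rewrite scalerA -scalerDl.
rewrite bcoord_comb // big_pred1_uniq //; case: ifP => // xw.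
rewrite !bcoord_out ?mulr0 ?addr0 //;
  by apply: contraFN xw => xs; rewrite mem_undup mem_cat xs ?orbT.
Qed.

Lemma bcoord0 x : bcoord x 0 = 0.
Proof.
have -> : 0 = \sum_(i <- [::]) 0 *: b i by rewrite big_nil.
by rewrite bcoord_comb ?big_nil.
Qed.

Lemma bcoordZ x a u : bcoord x (a *: u) = a * bcoord x u.
Proof. by rewrite -[a *: u]addr0 bcoord_linear bcoord0 addr0. Qed.

Lemma bcoordD x u v : bcoord x (u + v) = bcoord x u + bcoord x v.
Proof. by rewrite -[u]scale1r bcoord_linear scale1r mul1r. Qed.

Lemma bcoord_sum (J : Type) x (r : seq J) (P : pred J) (F : J -> V) :
  bcoord x (\sum_(j <- r | P j) F j) = \sum_(j <- r | P j) bcoord x (F j).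
Proof. exact: (big_morph _ (bcoordD x) (bcoord0 x)). Qed.

Lemma bcoord_ext u v : (forall x, bcoord x u = bcoord x v) -> u = v.
Proof.
move=> e; set w := undup (bsupp u ++ bsupp v).
have uw : uniq w by apply: undup_uniq.
rewrite (@bcoord_expand u w) // => [|i ui]; last by rewrite mem_undup mem_cat ui.
rewrite (@bcoord_expand v w) // => [|i vi]; last by rewrite mem_undup mem_cat vi orbT.
by apply: eq_bigr => x _; rewrite e.
Qed.

End BasisCoordinates.

(** * Slices of the tensor square *)

Section TensorSquare.
Variables (K : fieldType) (U T : algType K) (tens : U -> U -> T)
  (D : nat * K * nat * nat -> Prop) (b : nat * K * nat * nat -> U).
Hypothesis basis_b : basis_family D b.
Hypothesis tensor_T : is_tensor_square tens D b.

Lemma basis_tens : basis_family (fun p => D p.1 /\ D p.2) (fun p => tens (b p.1) (b p.2)).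
Proof. by case: tensor_T. Qed.

Local Notation coord := (bcoord basis_b).
Local Notation coord2 := (bcoord basis_tens).

Lemma tensDl x y z : tens (x + y) z = tens x z + tens y z.
Proof. by case: tensor_T => tl _ _ _ _; have := tl 1 x y z; rewrite !scale1r. Qed.
Lemma tensDr x y z : tens z (x + y) = tens z x + tens z y.
Proof. by case: tensor_T => _ tr _ _ _; have := tr 1 x y z; rewrite !scale1r. Qed.
Lemma tens0l z : tens 0 z = 0.
Proof. by apply: (addrI (tens 0 z)); rewrite -tensDl !addr0. Qed.
Lemma tens0r z : tens z 0 = 0.
Proof. by apply: (addrI (tens z 0)); rewrite -tensDr !addr0. Qed.
Lemma tensZl a x z : tens (a *: x) z = a *: tens x z.
Proof. by case: tensor_T => tl _ _ _ _; rewrite -[a *: x]addr0 tl tens0l addr0. Qed.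
Lemma tensZr a x z : tens z (a *: x) = a *: tens z x.
Proof. by case: tensor_T => _ tr _ _ _; rewrite -[a *: x]addr0 tr tens0r addr0. Qed.
Lemma tens_suml (J : Type) (r : seq J) (F : J -> U) z :
  tens (\sum_(j <- r) F j) z = \sum_(j <- r) tens (F j) z.
Proof. exact: (big_morph (tens^~ z) (fun x y => tensDl x y z) (tens0l z)). Qed.
Lemma tens_sumr (J : Type) (r : seq J) (F : J -> U) z :
  tens z (\sum_(j <- r) F j) = \sum_(j <- r) tens z (F j).
Proof. exact: (big_morph (tens z) (fun x y => tensDr x y z) (tens0r z)). Qed.
Lemma tensM x y x' y' : tens x y * tens x' y' = tens (x * x') (y * y').
Proof. by case: tensor_T. Qed.
Lemma tens11 : tens 1 1 = 1.
Proof. by case: tensor_T. Qed.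

Lemma bcoord_tens x y u v : coord2 (x, y) (tens u v) = coord x u * coord y v.
Proof.
set su := bsupp basis_b u; set sv := bsupp basis_b v.
set st := [seq (x', y') | x' <- su, y' <- sv].
have ust : uniq st by apply: allpairs_uniq; rewrite ?undup_uniq // => -[? ?] [? ?] _ _ [-> ->].
have Dst z : z \in st -> D z.1 /\ D z.2.
  by move=> /allpairsP[[x' y'] [xu yv ->]]; split; apply: bsupp_basis xu || apply: bsupp_basis yv.
have -> : tens u v = \sum_(z <- st) (coord z.1 u * coord z.2 v) *: tens (b z.1) (b z.2).
  rewrite {1}(bcoord_expand_supp basis_b u).
  rewrite {1}(bcoord_expand_supp basis_b v) big_allpairs.
  rewrite tens_suml; apply: eq_bigr => x' _; rewrite tensZl tens_sumr scaler_sumr.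
  by apply: eq_bigr => y' _; rewrite tensZr scalerA.
rewrite bcoord_comb // big_pred1_uniq //; case: ifPn => // xyst.
have : ~~ ((x \in su) && (y \in sv)) by apply: contra xyst => /andP[xu yv]; apply: allpairs_f.
by rewrite negb_and => /orP[/bcoord_out -> | /bcoord_out ->]; rewrite ?mul0r ?mulr0.
Qed.

(* The contraction [id (x) b_y^*] of the right tensor factor. *)
Definition rslice (y : nat * K * nat * nat) (w : T) : U :=
  \sum_(z <- bsupp basis_tens w | z.2 == y) coord2 z w *: b z.1.

Lemma bcoord_rslice x y w : coord x (rslice y w) = coord2 (x, y) w.
Proof.
rewrite /rslice bcoord_sum.
transitivity (\sum_(z <- bsupp basis_tens w | z == (x, y)) coord2 z w).
  rewrite big_mkcond [RHS]big_mkcond; apply: eq_big_seq => -[x' y'] /bsupp_basis[Dx' _] /=.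
  rewrite xpair_eqE; case: (y' =P y) => _; rewrite ?andbT ?andbF // bcoordZ bcoord_basis //.
  by case: (x' =P x); rewrite ?mulr1 ?mulr0.
by rewrite big_pred1_uniq ?undup_uniq //; case: ifPn => // /bcoord_out ->.
Qed.

Lemma rsliceD y w w' : rslice y (w + w') = rslice y w + rslice y w'.
Proof.
by apply: (bcoord_ext (basis_b := basis_b)) => x; rewrite bcoordD !bcoord_rslice bcoordD.
Qed.

Lemma rsliceZ y a w : rslice y (a *: w) = a *: rslice y w.
Proof.
by apply: (bcoord_ext (basis_b := basis_b)) => x; rewrite bcoordZ !bcoord_rslice bcoordZ.
Qed.

Lemma rslice0 y : rslice y 0 = 0.
Proof.
by apply: (bcoord_ext (basis_b := basis_b)) => x; rewrite bcoord_rslice !bcoord0.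
Qed.

Lemma rslice_sum y (J : Type) (r : seq J) (F : J -> T) :
  rslice y (\sum_(j <- r) F j) = \sum_(j <- r) rslice y (F j).
Proof. exact: (big_morph _ (rsliceD y) (rslice0 y)). Qed.

Lemma rslice_tens y u v : rslice y (tens u v) = coord y v *: u.
Proof.
by apply: (bcoord_ext (basis_b := basis_b)) => x; rewrite bcoord_rslice bcoord_tens bcoordZ mulrC.
Qed.

Lemma rslice_coideal (Delta : U -> T) (P : U -> Prop) y x :
  right_coideal tens Delta P -> P x -> P (rslice y (Delta x)).
Proof.
move=> [subP coP] /coP[r [Pr ->]].
by rewrite rslice_sum; under eq_bigr do rewrite rslice_tens; apply: subspace_comb.
Qed.

End TensorSquare.

Section QNumbers.
Variables (K : numFieldType) (q : K).
Hypothesis q_transc : transcendental q.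

Lemma transc_root p : p != 0 -> (map_poly ratr p).[q] != 0.
Proof. exact: q_transc. Qed.

Lemma transc_neq0 : q != 0.
Proof. by have := @transc_root 'X; rewrite map_polyX hornerX; apply; rewrite polyX_eq0. Qed.

Lemma transc_expf_neq1 d : (0 < d)%N -> q ^+ d != 1.
Proof.
move=> d0; have Xd1 : ('X^d - 1 : {poly rat}) != 0.
  apply/eqP => /(congr1 (horner^~ 0)) /eqP.
  by rewrite !hornerE expr0n gtn_eqF //= sub0r oppr_eq0 oner_eq0.
by have := transc_root Xd1; rewrite rmorphB /= map_polyXn rmorph1 !hornerE subr_eq0.
Qed.

Lemma transc_expf_inj : injective (GRing.exp q).
Proof.
suff lt_neq m n : (m < n)%N -> q ^+ m != q ^+ n.
  by move=> m n e; case: (ltngtP m n) => // mn; have := lt_neq _ _ mn; rewrite e eqxx.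
move=> mn; rewrite -(subnKC (ltnW mn)) exprD -subr_eq0 -{1}[q ^+ m]mulr1 -mulrBr.
by rewrite mulf_neq0 ?expf_neq0 ?transc_neq0 // subr_eq0 eq_sym transc_expf_neq1 // subn_gt0.
Qed.

Lemma transc_qden_neq0 : q - q^-1 != 0.
Proof.
rewrite subr_eq0; apply: contraNneq (transc_expf_neq1 (isT : 0 < 2)%N) => qqV.
by rewrite expr2 {2}qqV mulfV ?transc_neq0.
Qed.

Lemma qnum0 : qnum q 0 = 0.
Proof. by rewrite /qnum expr0 invr1 subrr mul0r. Qed.

Lemma qnum1 : qnum q 1 = 1.
Proof. by rewrite /qnum expr1 divff ?transc_qden_neq0. Qed.

Lemma qnum_neq0 n : qnum q n.+1 != 0.
Proof.
rewrite /qnum mulf_neq0 ?invr_eq0 ?transc_qden_neq0 // subr_eq0.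
apply: contraNneq (@transc_expf_neq1 (n.+1 + n.+1) isT) => e.
by rewrite exprD {1}e mulVf // expf_neq0 ?transc_neq0.
Qed.

Lemma qfactS n : qfact q n.+1 = qfact q n * qnum q n.+1.
Proof. by rewrite /qfact big_nat_recr. Qed.

Lemma qfact1 : qfact q 1 = 1.
Proof. by rewrite qfactS /qfact big_geq // mul1r qnum1. Qed.

Lemma qnum_pascal i r : (r < i.+2)%N ->
  (q ^+ r) ^+ 2 * q ^+ (i - r) * qnum q (i.+1 - r) + q ^+ r.-1 * qnum q r
  = q ^+ i * qnum q i.+1.
Proof.
case: r => [|r] ri; first by rewrite qnum0 mulr0 addr0 expr1n mul1r !subn0.
rewrite ltnS in ri; have [a ->] : exists a, i = (r + a)%N by exists (i - r)%N; lia.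
case: a => [|a]; first by rewrite addn0 subnn (_ : r - r.+1 = 0)%N ?qnum0 ?mulr0 ?add0r //; lia.
have -> : (r + a.+1 - r.+1 = a)%N by lia.
have -> : ((r + a.+1).+1 - r.+1 = a.+1)%N by lia.
have q0 := transc_neq0; have qq1 : q * q - 1 != 0.
  by rewrite -expr2 subr_eq0 transc_expf_neq1.
rewrite /qnum /= !exprS !exprD !exprS ?expr0 ?mulr1.
by field; rewrite q0 qq1 !expf_neq0.
Qed.

End QNumbers.

(** * Coproducts of divided powers *)

Lemma sum_pascal (K : fieldType) (V : lmodType K) n (A B W : nat -> V)
    (al be : nat -> K) g :
  (forall r, (r < n.+1)%N -> A r = al r *: W r) ->
  (forall r, (r < n.+1)%N -> B r = be r.+1 *: W r.+1) ->
  al n.+1 = 0 -> be 0 = 0 -> (forall r, (r < n.+2)%N -> al r + be r = g) ->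
  \sum_(0 <= r < n.+1) A r + \sum_(0 <= r < n.+1) B r = g *: \sum_(0 <= r < n.+2) W r.
Proof.
move=> AW BW al0 be0 albe.
rewrite (eq_big_nat _ _ (fun r rn => AW r (andP rn).2)).
rewrite (eq_big_nat _ _ (fun r rn => BW r (andP rn).2)).
have -> : g *: \sum_(0 <= r < n.+2) W r = \sum_(0 <= r < n.+2) (al r *: W r + be r *: W r).
  by rewrite scaler_sumr; apply: eq_big_nat => r /andP[_ rn]; rewrite -scalerDl albe.
rewrite big_split /= [X in _ = X + _]big_nat_recr //= al0 scale0r addr0.
by rewrite [X in _ = _ + X]big_nat_recl //= be0 scale0r add0r.
Qed.

Section Coproduct.
Variables (K : numFieldType) (q qh : K) (U T : algType K) (E F G : U) (f : K -> U)
  (tens : U -> U -> T) (Delta : U -> T).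
Hypothesis q_transc : transcendental q.
Hypothesis qh2 : qh ^+ 2 = q.
Hypothesis rel : U_relations q E F G f.
Hypothesis coprod : is_coproduct tens qh E F G f Delta.
Hypothesis tensor_T : is_tensor_square tens (fun x => x.1.1.2 != 0) (pbw q qh E F G f).

Local Notation Fd := (Fdiv q qh F f).
Local Notation Ed := (Ediv q qh E f).
Local Notation Gd := (Gdiv G).
Local Notation b := (pbw q qh E F G f).
Local Notation q_neq0 := (transc_neq0 q_transc).

Lemma qh_neq0 : qh != 0.
Proof. by apply: contraNneq q_neq0 => qh0; rewrite -qh2 qh0 expr0n. Qed.

Lemma fM a c : a != 0 -> c != 0 -> f a * f c = f (a * c).
Proof. by case: rel => fM _; apply: fM. Qed.
Lemma f1 : f 1 = 1.
Proof. by case: rel => _ [_ [_ [_ [_ [_ [_ ->]]]]]]. Qed.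
Lemma fC a c : a != 0 -> c != 0 -> f a * f c = f c * f a.
Proof. by move=> a0 c0; rewrite !fM // mulrC. Qed.
Lemma Ef a : a != 0 -> E * f a = a ^- 2 *: (f a * E).
Proof. by move=> a0; case: rel => _ [-> //]; rewrite scalerA mulVf ?scale1r ?expf_neq0. Qed.
Lemma fF a : a != 0 -> f a * F = a ^- 2 *: (F * f a).
Proof. by case: rel => _ [_ [fF _]]; apply: fF. Qed.

Lemma DeltaM x y : Delta (x * y) = Delta x * Delta y.
Proof. by case: coprod => _ [DM _]; apply: DM. Qed.
Lemma Delta1 : Delta 1 = 1.
Proof. by case: coprod => _ [_ [D1 _]]. Qed.
Lemma Delta_f a : a != 0 -> Delta (f a) = tens (f a) (f a).
Proof. by case: coprod => _ [_ [_ [_ [_ [_ Df]]]]]; apply: Df. Qed.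
Lemma DeltaD x y : Delta (x + y) = Delta x + Delta y.
Proof. by case: coprod => Dlin _; have := Dlin 1 x y; rewrite !scale1r. Qed.
Lemma Delta0 : Delta 0 = 0.
Proof. by apply: (addrI (Delta 0)); rewrite -DeltaD !addr0. Qed.
Lemma DeltaZ a x : Delta (a *: x) = a *: Delta x.
Proof. by case: coprod => Dlin _; rewrite -[a *: x]addr0 Dlin Delta0 addr0. Qed.
Lemma Delta_sum (J : Type) (r : seq J) (Fx : J -> U) :
  Delta (\sum_(j <- r) Fx j) = \sum_(j <- r) Delta (Fx j).
Proof. exact: (big_morph _ DeltaD Delta0). Qed.

Lemma qVn_neq0 n : q ^- n != 0.
Proof. by rewrite invr_eq0 expf_neq0 ?q_neq0. Qed.
Lemma qhVn_neq0 n : qh ^- n != 0.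
Proof. by rewrite invr_eq0 expf_neq0 ?qh_neq0. Qed.
Lemma qhV_neq0 : qh^-1 != 0.
Proof. by rewrite invr_eq0 qh_neq0. Qed.

Lemma qhV2 n : (qh ^- n) ^- 2 = q ^+ n.
Proof. by rewrite exprVn invrK -exprM mulnC exprM qh2. Qed.

Lemma Fdiv0 : Fd 0 = 1.
Proof. by rewrite /Fdiv /qfact big_geq // invr1 scale1r !expr0 ?invr1 f1 mul1r. Qed.
Lemma Ediv0 : Ed 0 = 1.
Proof. by rewrite /Ediv /qfact big_geq // invr1 scale1r !expr0 ?invr1 f1 mul1r. Qed.
Lemma Gdiv0 : Gd 0 = 1.
Proof. by rewrite /Gdiv fact0 invr1 scale1r expr0. Qed.
Lemma Fdiv1 : Fd 1 = F * f qh^-1.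
Proof. by rewrite /Fdiv (qfact1 q_transc) invr1 scale1r !expr1. Qed.
Lemma Ediv1 : Ed 1 = f qh^-1 * E.
Proof. by rewrite /Ediv (qfact1 q_transc) invr1 scale1r !expr1. Qed.

Lemma FdivS n : Fd n * Fd 1 = (q ^+ n * qnum q n.+1) *: Fd n.+1.
Proof.
rewrite Fdiv1 /Fdiv -scalerAl -mulrA (mulrA (f _)) fF ?qhVn_neq0 // (qhV2 n).
rewrite -scalerAl -scalerAr -!mulrA fM ?qhVn_neq0 ?qhV_neq0 //.
rewrite -invfM -exprSr mulrA -exprSr !scalerA qfactS invfM; congr (_ *: _).
by rewrite mulrACA mulfV ?qnum_neq0 // mulr1 mulrC.
Qed.

Lemma EdivS n : Ed 1 * Ed n = (q ^+ n * qnum q n.+1) *: Ed n.+1.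
Proof.
rewrite Ediv1 /Ediv -scalerAr -mulrA (mulrA E) Ef ?qhVn_neq0 // (qhV2 n).
rewrite -scalerAl -scalerAr [in LHS]mulrA [in LHS]mulrA fM ?qhVn_neq0 ?qhV_neq0 //.
rewrite -invfM -exprS -[in LHS]mulrA -exprS !scalerA qfactS invfM; congr (_ *: _).
by rewrite mulrACA mulfV ?qnum_neq0 // mulr1 mulrC.
Qed.

Lemma GdivS n : Gd n * G = n.+1%:R *: Gd n.+1.
Proof.
rewrite /Gdiv -scalerAl -exprSr scalerA factS natrM invfM mulrA mulfV ?mul1r //.
by rewrite pnatr_eq0.
Qed.

Lemma qhVqhV : qh^-1 * qh^-1 = q^-1.
Proof. by rewrite -invfM -expr2 qh2. Qed.

Lemma fqV_mul n : f (q ^- n) * f q^-1 = f (q ^- n.+1).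
Proof. by rewrite fM ?qVn_neq0 ?invr_neq0 ?q_neq0 // -invfM exprSr. Qed.

Lemma fqV_mulr n : f q^-1 * f (q ^- n) = f (q ^- n.+1).
Proof. by rewrite fM ?qVn_neq0 ?invr_neq0 ?q_neq0 // -invfM exprS. Qed.

Lemma Delta_Fdiv1 : Delta (Fd 1) = tens (Fd 1) 1 + tens (f q^-1) (Fd 1).
Proof.
case: coprod => _ [_ [_ [_ [DF _]]]].
rewrite Fdiv1 DeltaM DF Delta_f ?qhV_neq0 // mulrDl !(tensM tensor_T).
by rewrite !fM ?qhV_neq0 ?qh_neq0 // mulfV ?qh_neq0 // f1 qhVqhV.
Qed.

Lemma Delta_Ediv1 : Delta (Ed 1) = tens (Ed 1) 1 + tens (f q^-1) (Ed 1).
Proof.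
case: coprod => _ [_ [_ [DE _]]].
rewrite Ediv1 DeltaM DE Delta_f ?qhV_neq0 // mulrDr !(tensM tensor_T).
by rewrite !fM ?qhV_neq0 ?qh_neq0 // mulVf ?qh_neq0 // f1 qhVqhV.
Qed.

Lemma fqVn_Fdiv1 n : f (q ^- n) * Fd 1 = (q ^+ n) ^+ 2 *: (Fd 1 * f (q ^- n)).
Proof.
rewrite Fdiv1 mulrA fF ?qVn_neq0 // exprVn invrK -scalerAl -!mulrA.
by rewrite fC ?qVn_neq0 ?qhV_neq0.
Qed.

Lemma Ediv1_fqVn n : Ed 1 * f (q ^- n) = (q ^+ n) ^+ 2 *: (f (q ^- n) * Ed 1).
Proof.
rewrite Ediv1 -mulrA Ef ?qVn_neq0 // exprVn invrK -scalerAr !mulrA.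
by rewrite fC ?qVn_neq0 ?qhV_neq0.
Qed.

Lemma Delta_Fdiv n :
  Delta (Fd n) = \sum_(0 <= r < n.+1) tens (Fd (n - r) * f (q ^- r)) (Fd r).
Proof.
elim: n => [|n IH].
  by rewrite big_nat1 subnn Fdiv0 expr0 invr1 f1 mulr1 (tens11 tensor_T) Delta1.
have g0 : q ^+ n * qnum q n.+1 != 0 by rewrite mulf_neq0 ?expf_neq0 ?qnum_neq0 ?q_neq0.
have -> : Fd n.+1 = (q ^+ n * qnum q n.+1)^-1 *: (Fd n * Fd 1).
  by rewrite FdivS scalerA mulVf // scale1r.
rewrite DeltaZ DeltaM IH Delta_Fdiv1 mulr_suml.
under eq_bigr do rewrite mulrDr.
rewrite big_split /= (@sum_pascal _ _ n _ _ (fun r => tens (Fd (n.+1 - r) * f (q ^- r)) (Fd r))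
  (fun r => (q ^+ r) ^+ 2 * q ^+ (n - r) * qnum q (n.+1 - r))
  (fun r => q ^+ r.-1 * qnum q r) (q ^+ n * qnum q n.+1)).
- by rewrite scalerA mulVf // scale1r.
- move=> r rn; rewrite (tensM tensor_T) mulr1 -mulrA fqVn_Fdiv1 -scalerAr mulrA FdivS.
  by rewrite -scalerAl scalerA (tensZl tensor_T) subSn ?mulrA.
- by move=> r _; rewrite (tensM tensor_T) -mulrA fqV_mul FdivS (tensZr tensor_T).
- by rewrite subnn qnum0 mulr0.
- by rewrite qnum0 mulr0.
- by move=> r rn; rewrite qnum_pascal.
Qed.

Lemma Delta_Ediv n :
  Delta (Ed n) = \sum_(0 <= l < n.+1) tens (f (q ^- l) * Ed (n - l)) (Ed l).
Proof.
elim: n => [|n IH].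
  by rewrite big_nat1 subnn Ediv0 expr0 invr1 f1 mulr1 (tens11 tensor_T) Delta1.
have g0 : q ^+ n * qnum q n.+1 != 0 by rewrite mulf_neq0 ?expf_neq0 ?qnum_neq0 ?q_neq0.
have -> : Ed n.+1 = (q ^+ n * qnum q n.+1)^-1 *: (Ed 1 * Ed n).
  by rewrite EdivS scalerA mulVf // scale1r.
rewrite DeltaZ DeltaM IH Delta_Ediv1 mulrDl !mulr_sumr.
rewrite (@sum_pascal _ _ n _ _ (fun r => tens (f (q ^- r) * Ed (n.+1 - r)) (Ed r))
  (fun r => (q ^+ r) ^+ 2 * q ^+ (n - r) * qnum q (n.+1 - r))
  (fun r => q ^+ r.-1 * qnum q r) (q ^+ n * qnum q n.+1)).
- by rewrite scalerA mulVf // scale1r.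
- move=> r rn; rewrite (tensM tensor_T) mul1r mulrA Ediv1_fqVn -scalerAl -[in LHS]mulrA EdivS.
  by rewrite -scalerAr scalerA (tensZl tensor_T) subSn ?mulrA.
- by move=> r _; rewrite (tensM tensor_T) mulrA fqV_mulr EdivS (tensZr tensor_T).
- by rewrite subnn qnum0 mulr0.
- by rewrite qnum0 mulr0.
- by move=> r rn; rewrite qnum_pascal.
Qed.

Lemma Delta_Gdiv n : Delta (Gd n) = \sum_(0 <= m < n.+1) tens (Gd (n - m)) (Gd m).
Proof.
elim: n => [|n IH]; first by rewrite big_nat1 subnn Gdiv0 (tens11 tensor_T) Delta1.
case: coprod => _ [_ [_ [_ [_ [DG _]]]]].
have n1 : n.+1%:R != 0 :> K by rewrite pnatr_eq0.
have -> : Gd n.+1 = n.+1%:R^-1 *: (Gd n * G) by rewrite GdivS scalerA mulVf // scale1r.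
rewrite DeltaZ DeltaM IH DG mulr_suml.
under eq_bigr do rewrite mulrDr.
rewrite big_split /= addrC (@sum_pascal _ _ n _ _ (fun r => tens (Gd (n.+1 - r)) (Gd r))
  (fun r => (n.+1 - r)%:R) (fun r => r%:R) n.+1%:R).
- by rewrite scalerA mulVf // scale1r.
- by move=> r rn; rewrite (tensM tensor_T) mulr1 GdivS (tensZl tensor_T) subSn.
- by move=> r _; rewrite (tensM tensor_T) mulr1 GdivS (tensZr tensor_T).
- by rewrite subnn.
- by [].
- by move=> r rn; rewrite -natrD subnK.
Qed.

Lemma Delta_pbw i la j k : la != 0 ->
  Delta (b (i, la, j, k)) = \sum_(0 <= r < i.+1) \sum_(0 <= l < j.+1) \sum_(0 <= m < k.+1)
     tens (b ((i - r)%N, q ^- r * la * q ^- l, (j - l)%N, (k - m)%N)) (b (r, la, l, m)).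
Proof.
move=> la0; rewrite /pbw /= !DeltaM Delta_Fdiv Delta_f // Delta_Ediv Delta_Gdiv.
rewrite !mulr_suml; apply: eq_bigr => r _.
rewrite [_ * tens (f la) (f la) * _]mulr_sumr mulr_suml; apply: eq_bigr => l _.
rewrite mulr_sumr; apply: eq_bigr => m _.
rewrite !(tensM tensor_T); congr tens.
rewrite -!mulrA (mulrA (f (q ^- r))) fM ?qVn_neq0 //.
by rewrite (mulrA (f (q ^- r * la))) fM ?mulf_neq0 ?qVn_neq0 // [q ^- r * (_ * _)]mulrA.
Qed.

End Coproduct.

(** * Triangular slices of the coproduct *)

Section LeadingTerms.
Variable s : seq (nat * nat * nat).

Definition top_degree n : nat := \max_(p <- s | (n <= p.1.1 + p.1.2)%N) p.2.

Definition lead n : nat * nat * nat :=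
  nth (0, 0, 0)%N s (find (fun p => (n <= p.1.1 + p.1.2)%N && (p.2 == top_degree n)) s).

Lemma lead_spec n : has (fun p => n <= p.1.1 + p.1.2)%N s ->
  [/\ lead n \in s, (n <= (lead n).1.1 + (lead n).1.2)%N
    & forall p, p \in s -> (n <= p.1.1 + p.1.2)%N -> (p.2 <= (lead n).2)%N].
Proof.
move=> hn; have [p /andP[ps pn] ptop] := bigmax_seq_attained snd hn.
have hp : has (fun p => (n <= p.1.1 + p.1.2)%N && (p.2 == top_degree n)) s.
  by apply/hasP; exists p; rewrite // pn ptop eqxx.
have /andP[ln /eqP ltop] := nth_find (0, 0, 0)%N hp.
split=> //; first by rewrite mem_nth // -has_find.
by move=> p' p's p'n; rewrite ltop; apply: leq_bigmax_seq.
Qed.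

Definition slice_index : seq (nat * nat) :=
  [seq (n, t) | t <- iota 0 (part4 s).+1, n <- iota 0 (s13 s t).+1].

Lemma size_slice_index : size slice_index = \sum_(t < (part4 s).+1) (s13 s t).+1.
Proof.
rewrite size_allpairs_dep sumnE big_map -(big_mkord predT (fun t => (s13 s t).+1)).
by apply: eq_bigr => t _; rewrite size_iota.
Qed.

Lemma uniq_slice_index : uniq slice_index.
Proof.
apply: allpairs_uniq_dep => [|t _|]; rewrite ?iota_uniq //.
by move=> [t1 n1] [t2 n2] _ _ /= [-> ->].
Qed.

Lemma slice_index_lead x : s != [::] -> x \in slice_index ->
  has (fun p => x.1 <= p.1.1 + p.1.2)%N s /\ (x.2 <= (lead x.1).2)%N.
Proof.
move=> s0 /allpairsPdep[t [n [+ + ->]]] /=; rewrite !mem_iota !add0n !ltnS /= => tN ns13.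
have hs : has xpredT s by rewrite has_predT lt0n size_eq0.
have [p0 /andP[p0s _] p0top] := bigmax_seq_attained snd hs.
have ht : has (fun p => t <= p.2)%N s by apply/hasP; exists p0; rewrite // p0top.
have [p /andP[ps tp] pn] := bigmax_seq_attained (fun p => p.1.1 + p.1.2)%N ht.
have hn : has (fun p => n <= p.1.1 + p.1.2)%N s by apply/hasP; exists p; rewrite // pn.
split=> //; have [_ _ ltop] := lead_spec hn.
by apply: leq_trans tp (ltop _ ps _); rewrite pn.
Qed.

End LeadingTerms.

Lemma pbw_index_shift_eq (i j k r l m a a' k' : nat) (A : eqType) (nu nu' : A) :
  [&& (r <= i)%N, (l <= j)%N, (m <= k)%N
    & ((i - r)%N, nu', (j - l)%N, (k - m)%N) == (a, nu, a', k')]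
  = ((i, j, k) == ((a + r)%N, (a' + l)%N, (k' + m)%N)) && (nu == nu').
Proof.
apply/idP/idP => [/and4P[ri lj mk /eqP[<- -> <- <-]] | /andP[/eqP[-> -> ->] /eqP ->]].
  by rewrite !subnK // !eqxx.
by rewrite !leq_addl !addnK !eqxx.
Qed.

Section Slices.
Variables (K : numFieldType) (q qh : K) (U T : algType K) (E F G : U) (f : K -> U)
  (tens : U -> U -> T) (Delta : U -> T) (mu : K) (s : seq (nat * nat * nat))
  (c : nat * nat * nat -> K).
Hypothesis q_transc : transcendental q.
Hypothesis qh2 : qh ^+ 2 = q.
Hypothesis rel : U_relations q E F G f.
Hypothesis basis_U : basis_family (fun x : nat * K * nat * nat => x.1.1.2 != 0) (pbw q qh E F G f).
Hypothesis tensor_T : is_tensor_square tens (fun x => x.1.1.2 != 0) (pbw q qh E F G f).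
Hypothesis coprod : is_coproduct tens qh E F G f Delta.
Hypothesis mu0 : mu != 0.
Hypothesis uniq_s : uniq s.

Local Notation b := (pbw q qh E F G f).
Local Notation coord := (bcoord basis_U).
Local Notation rslice := (rslice tensor_T).
Local Notation X := (\sum_(p <- s) c p *: b (p.1.1, mu, p.1.2, p.2)).

Lemma rslice_Delta_pbw i la j k r0 l0 m0 : la != 0 ->
  rslice (r0, la, l0, m0) (Delta (b (i, la, j, k))) =
  if [&& (r0 <= i)%N, (l0 <= j)%N & (m0 <= k)%N]
  then b ((i - r0)%N, q ^- r0 * la * q ^- l0, (j - l0)%N, (k - m0)%N) else 0.
Proof.
move=> la0; rewrite (Delta_pbw q_transc qh2 rel coprod tensor_T) // (rslice_sum basis_U).
have delta3 r l m (w : U) : ((r, la, l, m) == (r0, la, l0, m0))%:R *: w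
    = (r == r0)%:R *: ((l == l0)%:R *: ((m == m0)%:R *: w)).
  by rewrite !xpair_eqE eqxx andbT; case: (r =P r0); case: (l =P l0); case: (m =P m0);
     rewrite /= ?scale1r ?scale0r ?scaler0.
under eq_bigr do rewrite (rslice_sum basis_U).
under eq_bigr do under eq_bigr do rewrite (rslice_sum basis_U).
under eq_bigr do under eq_bigr do under eq_bigr do
  rewrite (rslice_tens basis_U tensor_T) bcoord_basis // delta3.
under eq_bigr do under eq_bigr do rewrite -scaler_sumr -scaler_sumr sum_nat_delta.
under eq_bigr do rewrite -scaler_sumr sum_nat_delta.
rewrite sum_nat_delta !ltnS.
by case: (r0 <= i)%N; case: (l0 <= j)%N; case: (m0 <= k)%N; rewrite /= ?scale1r ?scale0r ?scaler0.
Qed.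

Lemma coord_rslice_DeltaX r0 l0 m0 a nu a' k' :
  coord (a, nu, a', k') (rslice (r0, mu, l0, m0) (Delta X)) =
  if (nu == q ^- r0 * mu * q ^- l0) && ((a + r0, a' + l0, k' + m0)%N \in s)
  then c (a + r0, a' + l0, k' + m0)%N else 0.
Proof.
set nu0 := q ^- r0 * mu * q ^- l0; set p0 := (a + r0, a' + l0, k' + m0)%N.
rewrite (Delta_sum coprod) (rslice_sum basis_U) bcoord_sum.
rewrite (eq_bigr (fun p => c p * ((p == p0) && (nu == nu0))%:R)) => [|[[i j] k] _ /=].
  case: (nu == nu0) => /=; last by rewrite big1 // => p _; rewrite andbF mulr0.
  under eq_bigr do rewrite andbT.
  rewrite -big_pred1_uniq // [RHS]big_mkcond; apply: eq_bigr => p _.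
  by case: (p == p0); rewrite ?mulr1 ?mulr0.
rewrite (DeltaZ coprod) (rsliceZ basis_U) rslice_Delta_pbw //.
rewrite bcoordZ (fun_if (coord _)) bcoord0 bcoord_basis ?mulf_neq0 ?(qVn_neq0 q_transc) //.
by rewrite -pbw_index_shift_eq; case: (r0 <= i)%N; case: (l0 <= j)%N; case: (m0 <= k)%N.
Qed.

Lemma qVn_mu_qVn_inj a l a' l' :
  q ^- a * mu * q ^- l = q ^- a' * mu * q ^- l' -> (a + l = a' + l')%N.
Proof.
rewrite ![q ^- _ * mu]mulrC -!mulrA -!invfM -!exprD => /(mulfI mu0) /invr_inj.
exact: transc_expf_inj.
Qed.

Definition split_left (x : nat * nat) : nat := minn x.1 (lead s x.1).1.1.
Definition split_right (x : nat * nat) : nat := x.1 - split_left x.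

Definition slice_point (x : nat * nat) : nat * K * nat * nat :=
  (split_left x, mu, split_right x, x.2).

Definition lead_target (x : nat * nat) : nat * K * nat * nat :=
  (((lead s x.1).1.1 - split_left x)%N, q ^- split_left x * mu * q ^- split_right x,
   ((lead s x.1).1.2 - split_right x)%N, ((lead s x.1).2 - x.2)%N).

Lemma split_le x : (x.1 <= (lead s x.1).1.1 + (lead s x.1).1.2)%N ->
  (split_left x <= (lead s x.1).1.1)%N /\ (split_right x <= (lead s x.1).1.2)%N.
Proof. by rewrite /split_right /split_left; case: x => n t /=; lia. Qed.

Lemma coord_lead_target x : s != [::] -> x \in slice_index s ->
  coord (lead_target x) (rslice (slice_point x) (Delta X)) = c (lead s x.1).
Proof.
move=> s0 xI; have [hn tl] := slice_index_lead s0 xI.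
have [ls nl _] := lead_spec hn; have [le_l le_r] := split_le nl.
by rewrite coord_rslice_DeltaX eqxx !subnK // -!surjective_pairing ls.
Qed.

Lemma coord_lead_target_upper x x' : s != [::] ->
  x \in slice_index s -> x' \in slice_index s -> x' != x -> (x.2 <= x'.2)%N ->
  coord (lead_target x) (rslice (slice_point x') (Delta X)) = 0.
Proof.
move=> s0 xI x'I x'x tt'; rewrite coord_rslice_DeltaX.
have [n1_eq | n1_neq] := eqVneq x.1 x'.1; last first.
  case: eqP => // /qVn_mu_qVn_inj; rewrite /split_right !subnKC ?geq_minl //.
  by move/eqP: n1_neq.
have [hn tl] := slice_index_lead s0 xI; have [_ nl lmax] := lead_spec hn.
have [le_l le_r] := split_le nl.
have lt_t : (x.2 < x'.2)%N.
  rewrite ltn_neqAle tt' andbT; apply: contra x'x => /eqP t_eq.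
  by apply/eqP; rewrite [x]surjective_pairing [x']surjective_pairing n1_eq t_eq.
rewrite /split_right /split_left -n1_eq eqxx !subnK //=.
case: ifP => // /lmax /(_ nl) /= le; exfalso; move: le.
by rewrite -{2}(subnK tl) leq_add2l leqNgt lt_t.
Qed.

Lemma lin_indep_slices : s != [::] -> (forall p, p \in s -> c p != 0) ->
  lin_indep (fun i : 'I_(size (slice_index s)) =>
    rslice (slice_point (nth (0, 0)%N (slice_index s) i)) (Delta X)).
Proof.
move=> s0 c_neq0; set I := slice_index s.
have I_nth (i : 'I_(size I)) : nth (0, 0)%N I i \in I by apply: mem_nth.
apply: (@lin_indep_triangular _ _ _ _ (fun i => coord (lead_target (nth (0, 0)%N I i)))
                              (fun i => (nth (0, 0)%N I i).2)).
- by move=> i a; rewrite bcoord_sum; apply: eq_bigr => j _; rewrite bcoordZ.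
- move=> i; rewrite coord_lead_target //; apply: c_neq0.
  by have [hn _] := slice_index_lead s0 (I_nth i); have [] := lead_spec hn.
- move=> i j ji tij; apply: coord_lead_target_upper => //.
  by rewrite nth_uniq ?uniq_slice_index.
Qed.

End Slices.

Theorem mainTheorem4 (R : realType) (q qh : R[i])
  (U : algType R[i]) (E F G : U) (f : R[i] -> U)
  (T : algType R[i]) (tens : U -> U -> T) (Delta : U -> T)
  (P : U -> Prop) (mu : R[i]) (s : seq (nat * nat * nat))
  (c : nat * nat * nat -> R[i]) :
  transcendental q ->
  qh ^+ 2 = q ->
  U_relations q E F G f ->
  basis_family (fun x : nat * R[i] * nat * nat => x.1.1.2 != 0)
               (pbw q qh E F G f) ->
  is_tensor_square tens (fun x : nat * R[i] * nat * nat => x.1.1.2 != 0)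
                   (pbw q qh E F G f) ->
  is_coproduct tens qh E F G f Delta ->
  right_coideal tens Delta P ->
  mu != 0 ->
  uniq s ->
  (forall p, p \in s -> c p != 0) ->
  let X := \sum_(p <- s) c p *: pbw q qh E F G f (p.1.1, mu, p.1.2, p.2) in
  X != 0 ->
  P X ->
  dim_ge P (\sum_(t < (part4 s).+1) (s13 s t).+1).
Proof.
move=> q_transc qh2 rel basis_U tensor_T coprod coideal mu0 uniq_s c_neq0 X X0 PX.
have s0 : s != [::] by apply: contraNneq X0 => s_nil; rewrite /X s_nil big_nil.
rewrite -size_slice_index.
exists (fun i => rslice tensor_T (slice_point mu s (nth (0, 0)%N (slice_index s) i)) (Delta X)).
split=> [i|]; first exact: (rslice_coideal basis_U tensor_T _ coideal PX).
exact: lin_indep_slices.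
Qed.
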